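(* Let $\rho_1,\rho_2\colon\mathrm{Isom}(\mathbf H^1_{\mathbb C})_o\to\mathrm{Isom}(\mathbf H^\infty_{\mathbb C})_o$ be irreducible representations with $\ell(\rho_1)=\ell(\rho_2)$, having the same distinguished boundary points $\eta_1,\eta_2$ (i.e. $\eta_1$ is fixed by all $\rho_i(g(\lambda,b))$ and $\eta_2$ by all $\rho_i(g(\lambda,0))$, $i=1,2$), and let $K_1,K_2$ be their functions $K$ computed with the same isotropic representatives $\eta_1,\eta_2$, $B(\eta_1,\eta_2)=1$. Then $K_1(b)+K_2(b)\neq0$ for every $b\neq0$.
   Context: $\mathcal H$: separable complex Hilbert space with strongly non-degenerate Hermitian form $B$ (linear in first variable) of signature $(1,\infty)$; $\mathbf H^\infty_{\mathbb C}=\{[v]:B(v,v)>0\}$, $\cosh d([v],[w])=|B(v,w)|/\sqrt{B(v,v)B(w,w)}$, boundary = isotropic lines, $\mathrm{Isom}(\mathbf H^\infty_{\mathbb C})_o=PU(B)$. $\mathbf H^1_{\mathbb C}$: $\mathbb C^2$ with $B(z,w)=z_1\bar w_1-z_2\bar w_2$, $\xi_{1,2}=(e_1\pm e_2)/\sqrt2$; $g(\lambda,b)\in SU(1,1)$ has matrix $\begin{pmatrix}\lambda&ib\\0&\lambda^{-1}\end{pmatrix}$ in basis $(\xi_1,\xi_2)$. Representations are orbitally continuous; irreducible = no fixed point in $\mathbf H^\infty_{\mathbb C}\cup\partial\mathbf H^\infty_{\mathbb C}$, no invariant pair of boundary points, no proper invariant complex hyperbolic subspace. For such $\rho$, $\eta_1$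 is the unique common fixed boundary point of the $\rho(g(\lambda,b))$ and $\eta_2$ the other endpoint of the common axis of the $\rho(g(\lambda,0))$. With $E=\eta_1^\perp\cap\eta_2^\perp$, the lift $T_b\in U(B)$ of $\rho(g(1,b))$ with $T_b\eta_1=\eta_1$ satisfies $T_b\eta_2=K(b)\eta_1+\eta_2+c(b)$, $K(b)\in\mathbb C$, $c(b)\in E$. $\ell(\rho)$ is the $t>0$ with $\inf_xd(\rho(g(\lambda,0))x,x)=t|\ln\lambda|$. *)

From HB Require Import structures.
From mathcomp Require Import all_boot all_order all_algebra.
From mathcomp Require Import complex.
From mathcomp Require Import boolp classical_sets reals exp.
Set Implicit Arguments. Unset Strict Implicit. Unset Printing Implicit Defensive.
Import Order.TTheory GRing.Theory Num.Theory.
Local Open Scope ring_scope.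
Local Open Scope classical_set_scope.

Section Defs.
Variable R : realType.
Local Notation C := R[i].

Definition cR (x : R) : C := Complex x 0.
Definition modC (z : C) : R := Num.sqrt (complex.Re z ^+ 2 + complex.Im z ^+ 2).

Definition tends_to0 (u : nat -> R) : Prop :=
  forall eps : R, 0 < eps -> exists N : nat, forall n, (N <= n)%N -> `|u n| < eps.

Variable V : lmodType C.
Variable B : V -> V -> C.

Definition hermitian_form : Prop :=
  (forall (a : C) (u v w : V), B (a *: u + v) w = a * B u w + B v w) /\
  (forall u v : V, B v u = conjc (B u v)).

(* the norm on the negative definite part W = e0^perp, and the Hilbert norm *)
Definition nrmW (w : V) : R := Num.sqrt (complex.Re (- B w w)).
Definition hnorm (e0 v : V) : R :=
  Num.sqrt (modC (B v e0) ^+ 2 + nrmW (v - B v e0 *: e0) ^+ 2).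

(* (V, B) is a separable complex Hilbert space whose Hermitian form B is
   strongly non-degenerate of signature (1, infinity), with fundamental
   decomposition V = C e0 (+) e0^perp: B e0 e0 = 1, -B is positive definite
   on e0^perp, and e0^perp is complete, separable and infinite-dimensional
   for the inner product -B (the Hilbert topology is the one of hnorm e0). *)
Definition krein_1_inf (e0 : V) : Prop :=
  [/\ B e0 e0 = 1,
      (forall w, B w e0 = 0 -> w <> 0 -> 0 < complex.Re (- B w w)),
      (forall u : nat -> V, (forall n, B (u n) e0 = 0) ->
         (forall eps : R, 0 < eps -> exists N : nat, forall m n, (N <= m)%N -> (N <= n)%N ->
              nrmW (u m - u n) < eps) ->
         exists w, B w e0 = 0 /\ tends_to0 (fun n => nrmW (u n - w))),
      (exists s : nat -> V, (forall n, B (s n) e0 = 0) /\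
         forall w, B w e0 = 0 -> forall eps : R, 0 < eps -> exists n, nrmW (w - s n) < eps)
    & (forall n : nat, exists f : 'I_n -> V, (forall i, B (f i) e0 = 0) /\
         forall i j, - B (f i) (f j) = (i == j)%:R)].

Definition in_UB (T : V -> V) : Prop :=
  [/\ (forall u v, T (u + v) = T u + T v),
      (forall (a : C) v, T (a *: v) = a *: T v),
      bijective T
    & (forall u v, B (T u) (T v) = B u v)].

(* points of H^oo_C (positive vectors), of the boundary (isotropic nonzero
   vectors), and the distance d([v],[w]) = arccosh(|B(v,w)|/sqrt(B(v,v)B(w,w))) *)
Definition positive (v : V) : Prop := 0 < complex.Re (B v v).
Definition isotropic (v : V) : Prop := v <> 0 /\ B v v = 0.
Definition arccosh (x : R) : R := ln (x + Num.sqrt (x ^+ 2 - 1)).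
Definition hdist (v w : V) : R :=
  arccosh (modC (B v w) / Num.sqrt (complex.Re (B v v) * complex.Re (B w w))).

Definition fixes_line (T : V -> V) (v : V) : Prop := exists c : C, T v = c *: v.

Definition displacement (T : V -> V) : R :=
  inf [set hdist (T v) v | v in [set v | positive v]].

Definition J11 : 'M[C]_2 := \matrix_(i < 2, j < 2)
  (if i == j then (if i == 0 then 1 else -1) else 0).
Definition adjM (M : 'M[C]_2) : 'M[C]_2 := (map_mx conjc M)^T.
Definition inSU11 (M : 'M[C]_2) : Prop := adjM M *m J11 *m M = J11 /\ \det M = 1.

(* the change of basis matrix with columns xi_1 = (e1+e2)/sqrt2, xi_2 = (e1-e2)/sqrt2 *)
Definition Pxi : 'M[C]_2 := \matrix_(i < 2, j < 2)
  (cR (Num.sqrt 2)^-1 * (if (i == 1) && (j == 1) then -1 else 1)).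
(* g(lambda,b): matrix [[lambda, i b],[0, lambda^-1]] in the basis (xi_1, xi_2),
   written in the standard basis (Pxi^-1 = Pxi) *)
Definition gmat (lam b : R) : 'M[C]_2 :=
  Pxi *m (\matrix_(i < 2, j < 2)
            (if i == 0 then (if j == 0 then cR lam else Complex 0 b)
             else (if j == 0 then 0 else cR lam^-1))) *m Pxi.

(* A representation PU(1,1) -> PU(B), given through a choice of lifts
   rho g in U(B) of the image of [g], for g in SU(1,1):
   multiplicative up to unimodular scalars, -1 acting as a scalar,
   and orbitally continuous. *)
Definition unimod (c : C) : Prop := modC c = 1.

Definition is_rep (rho : 'M[C]_2 -> V -> V) : Prop :=
  [/\ (forall g, inSU11 g -> in_UB (rho g)),
      (forall g h, inSU11 g -> inSU11 h ->
         exists c, unimod c /\ forall v, rho (g *m h) v = c *: rho g (rho h v)),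
      (exists c, unimod c /\ forall v, rho (- 1%:M) v = c *: v)
    & (forall v, positive v -> forall g (gs : nat -> 'M[C]_2),
         inSU11 g -> (forall n, inSU11 (gs n)) ->
         (forall i j, tends_to0 (fun n => modC (gs n i j - g i j))) ->
         tends_to0 (fun n => hdist (rho (gs n) v) (rho g v)))].

(* complex hyperbolic subspaces: closed complex linear subspaces containing a
   positive vector *)
Definition closed_subspace (e0 : V) (L : set V) : Prop :=
  [/\ L 0, (forall (a : C) u v, L u -> L v -> L (a *: u + v))
    & (forall (u : nat -> V) v, (forall n, L (u n)) ->
         tends_to0 (fun n => hnorm e0 (u n - v)) -> L v)].

Definition irreducible (e0 : V) (rho : 'M[C]_2 -> V -> V) : Prop :=
  [/\ (* no fixed point in H^oo_C or its boundary *)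
      ~ (exists v, v <> 0 /\ 0 <= complex.Re (B v v) /\
           forall g, inSU11 g -> fixes_line (rho g) v),
      (* no invariant pair of boundary points *)
      ~ (exists v w, isotropic v /\ isotropic w /\ ~ (exists c : C, w = c *: v) /\
           forall g, inSU11 g ->
             (fixes_line (rho g) v /\ fixes_line (rho g) w) \/
             ((exists c : C, rho g v = c *: w) /\ (exists c : C, rho g w = c *: v)))
    &
      ~ (exists L : set V, closed_subspace e0 L /\ (exists u, L u /\ positive u) /\
           L <> setT /\ forall g, inSU11 g -> forall u, L u -> L (rho g u))].

End Defs.

(* Assume K1 + K2 = 0. Unitarity of the lift T of rho(g(1,b)) gives 2 Re K = - B(c, c), and c
   lies in the orthogonal complement of the hyperbolic plane P = span(eta1, eta2), on which B is
   negative definite; so Re K1, Re K2 >= 0, whence Re K1 = 0 and c1 = 0. Then rho1(g(1, b)) and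
   rho1(g(1, -b)) = rho1(g(1, b))^-1 preserve P, and conjugating by the diagonal elements, which
   fix eta1 and eta2, so does rho1 of the whole upper triangular subgroup. As ell(rho1) > 0,
   rho1(g(2, 0)) has distinct eigenvalues on eta1 and eta2, so its isotropic eigenvectors lie in
   P; the Weyl element maps the eigenvectors of g(1/2, 0) to those of g(2, 0), hence also
   preserves P, and by the Bruhat decomposition so does rho1 of all of SU(1,1). This contradicts
   irreducibility, as P is a proper closed complex hyperbolic subspace. *)

From HB Require Import structures.
From mathcomp Require Import all_boot all_order all_algebra.
From mathcomp Require Import complex.
From mathcomp Require Import boolp classical_sets reals exp.
From mathcomp Require Import ring lra.
Import Order.TTheory GRing.Theory Num.Theory.
Local Open Scope ring_scope.
Local Open Scope classical_set_scope.

Set Implicit Arguments. Unset Strict Implicit. Unset Printing Implicit Defensive.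

Local Notation Re := complex.Re.
Local Notation Im := complex.Im.

Lemma ReJ (R : pzRingType) (x : R[i]) : Re x^*%C = Re x.
Proof. by case: x. Qed.

Lemma ImJ (R : pzRingType) (x : R[i]) : Im x^*%C = - Im x.
Proof. by case: x. Qed.

Section ComplexFacts.
Variable R : realType.
Implicit Types x y : R[i].

Lemma complex_eq x y : Re x = Re y -> Im x = Im y -> x = y.
Proof. by case: x => a b; case: y => c d /= -> ->. Qed.

Lemma ReM x y : Re (x * y) = Re x * Re y - Im x * Im y.
Proof. by case: x => a b; case: y => c d. Qed.

Lemma ImM x y : Im (x * y) = Re x * Im y + Im x * Re y.
Proof. by case: x => a b; case: y => c d. Qed.

Lemma conjc_eq_real x : x^*%C = x -> x = cR (Re x).
Proof.
move=> /(congr1 (@complex.Im R)); rewrite ImJ => hx.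
by apply: complex_eq => //=; lra.
Qed.

Lemma conjc_eq_imag x : x^*%C = - x -> x = Complex 0 (Im x).
Proof.
move=> /(congr1 (@complex.Re R)); rewrite ReJ raddfN /= => hx.
by apply: complex_eq => //=; lra.
Qed.

Lemma complex_ge0 x : Im x = 0 -> 0 <= Re x -> 0 <= x.
Proof. by move=> hI hR; rewrite lecE hI eqxx. Qed.

Lemma Re_ge0 x : 0 <= x -> 0 <= Re x.
Proof. by rewrite lecE => /andP[]. Qed.

Lemma modCE x : modC x = Re `|x|.
Proof. by rewrite normc_def. Qed.

Lemma unimod_neq0 x : unimod x -> x != 0.
Proof.
apply: contraPneq => ->.
by rewrite /unimod /modC /= expr0n /= addr0 sqrtr0 => /esym/eqP; rewrite oner_eq0.
Qed.

Lemma modC_ge0 x : 0 <= modC x.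
Proof. exact: sqrtr_ge0. Qed.

Lemma Re_le_modC x : `|Re x| <= modC x.
Proof. by rewrite /modC -sqrtr_sqr ler_sqrt ?lerDl ?addr_ge0 ?sqr_ge0. Qed.

Lemma modCM x y : modC (x * y) = modC x * modC y.
Proof.
rewrite !modCE normrM ReM.
by rewrite [Im `|x|]/= [Im `|y|]/= !normc_def /= mulr0 subr0.
Qed.

Lemma modC_conj x : modC x^*%C = modC x.
Proof. by rewrite /modC ReJ ImJ sqrrN. Qed.

End ComplexFacts.

Lemma tends_to0_dominated_eq0 (R : realType) (q k : R) (s : nat -> R) :
  0 <= k -> tends_to0 s -> (forall n, `|q| <= k * s n) -> q = 0.
Proof.
move=> k_ge0 s0 hq; apply/eqP; apply: contraT => q_neq0.
have q_gt0 : 0 < `|q| by rewrite normr_gt0.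
have k1_gt0 : 0 < k + 1 by rewrite ltr_wpDl.
have [N /(_ N (leqnn N))] := s0 _ (divr_gt0 q_gt0 k1_gt0).
rewrite ltr_pdivlMr // => hsN.
have := hq N; have := ler_norm (s N); have := normr_ge0 (s N); nra.
Qed.

Lemma le_sqrt_sqrD (R : realType) (x y : R) : x <= Num.sqrt (x ^+ 2 + y ^+ 2).
Proof.
apply: le_trans (ler_norm x) _.
by rewrite -sqrtr_sqr ler_sqrt ?lerDl ?addr_ge0 ?sqr_ge0.
Qed.

Section Span2.
Variables (R : realType) (V : lmodType R[i]).

Definition span2 (u v : V) : set V := [set w | exists a b, w = a *: u + b *: v].

Variables u v : V.

Lemma span2DZ a x y : span2 u v x -> span2 u v y -> span2 u v (a *: x + y).
Proof.
move=> [a1 [b1 ->]] [a2 [b2 ->]]; exists (a * a1 + a2), (a * b1 + b2).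
by rewrite scalerDr !scalerA !scalerDl addrACA.
Qed.

Lemma span2_0 : span2 u v 0.
Proof. by exists 0, 0; rewrite !scale0r addr0. Qed.

Lemma span2Z a x : span2 u v x -> span2 u v (a *: x).
Proof. by move=> hx; rewrite -[a *: x]addr0; apply: span2DZ hx span2_0. Qed.

Lemma span2D x y : span2 u v x -> span2 u v y -> span2 u v (x + y).
Proof. by rewrite -{2}[x]scale1r; apply: span2DZ. Qed.

Lemma span2_l : span2 u v u.
Proof. by exists 1, 0; rewrite scale1r scale0r addr0. Qed.

Lemma span2_r : span2 u v v.
Proof. by exists 0, 1; rewrite scale1r scale0r add0r. Qed.

End Span2.

Section SU11.
Variable R : realType.
Local Notation C := R[i].
Implicit Types (M N g h : 'M[C]_2).

Lemma ord2P (i : 'I_2) : i = 0 \/ i = 1.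
Proof. by case: i => [[|[|k]] Hk]; [left | right | by []]; apply: val_inj. Qed.

Lemma sum_ord2 (F : 'I_2 -> C) : \sum_(k < 2) F k = F 0 + F 1.
Proof.
rewrite !big_ord_recl big_ord0 addr0.
by have -> : lift ord0 (ord0 : 'I_1) = 1 :> 'I_2 by apply: val_inj.
Qed.

Ltac mx2_ext := apply/matrixP; let i := fresh "i" in let j := fresh "j" in
  move=> i j; case: (ord2P i) => ->; case: (ord2P j) => ->;
  rewrite ?mxE ?sum_ord2 ?mxE ?sum_ord2 ?mxE /=.

Lemma det_mx2 M : \det M = M 0 0 * M 1 1 - M 0 1 * M 1 0.
Proof.
rewrite (expand_det_row _ 0) sum_ord2 /cofactor !det_mx11 !mxE.
have -> : lift 0 (0 : 'I_1) = 1 :> 'I_2 by apply: val_inj.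
have -> : lift 1 (0 : 'I_1) = 0 :> 'I_2 by apply: val_inj.
by rewrite expr0 expr1 !mul1r mulN1r mulrN.
Qed.

Lemma adjM_mul M N : adjM (M *m N) = adjM N *m adjM M.
Proof. by rewrite /adjM map_mxM trmx_mul. Qed.

Lemma inSU11_mul g h : inSU11 g -> inSU11 h -> inSU11 (g *m h).
Proof.
move=> [g1 g2] [h1 h2]; split; last by rewrite det_mulmx g2 h2 mulr1.
by rewrite adjM_mul !mulmxA -(mulmxA _ (adjM g)) -(mulmxA _ (adjM g *m _)) g1 h1.
Qed.

(* [Pxi] is an involution conjugating [J11] into [Jxi]: in the basis (xi_1, xi_2), SU(1,1) is
   [inSUxi], g(lam, b) is [gxi lam b], and [wxi] is a Weyl element. *)
Definition Jxi : 'M[C]_2 := \matrix_(i < 2, j < 2) (if i == j then 0 else 1).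
Definition inSUxi M := adjM M *m Jxi *m M = Jxi /\ \det M = 1.

Definition gxi (lam b : R) : 'M[C]_2 := \matrix_(i < 2, j < 2)
  (if i == 0 then (if j == 0 then cR lam else Complex 0 b)
   else (if j == 0 then 0 else cR lam^-1)).
Definition wxi : 'M[C]_2 := \matrix_(i < 2, j < 2) (if i == j then 0 else Complex 0 1).
Definition weyl : 'M[C]_2 := Pxi R *m wxi *m Pxi R.

Lemma gmatE (lam b : R) : gmat lam b = Pxi R *m gxi lam b *m Pxi R.
Proof. by []. Qed.

Lemma sqrt2V_sqr : (Num.sqrt (2 : R))^-1 * (Num.sqrt 2)^-1 = 2^-1.
Proof. by rewrite -invfM -expr2 sqr_sqrtr // ler0n. Qed.

Lemma PxiK : Pxi R *m Pxi R = 1.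
Proof.
by mx2_ext; apply: complex_eq; rewrite /= ?mxE; move: sqrt2V_sqr; set s := _^-1; nra.
Qed.

Lemma Pxi_adj : adjM (Pxi R) = Pxi R.
Proof. by rewrite /adjM; mx2_ext; apply: complex_eq; rewrite /= ?mxE //=; lra. Qed.

Lemma Pxi_J11 : Pxi R *m J11 R *m Pxi R = Jxi.
Proof.
by mx2_ext; apply: complex_eq; rewrite /= ?mxE; move: sqrt2V_sqr; set s := _^-1; nra.
Qed.

Lemma xi_conjM M N :
  (Pxi R *m M *m Pxi R) *m (Pxi R *m N *m Pxi R) = Pxi R *m (M *m N) *m Pxi R.
Proof. by rewrite !mulmxA -(mulmxA _ (Pxi R) (Pxi R)) PxiK mulmx1. Qed.

Lemma xi_conjK g : Pxi R *m (Pxi R *m g *m Pxi R) *m Pxi R = g.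
Proof. by rewrite !mulmxA PxiK mul1mx -mulmxA PxiK mulmx1. Qed.

Lemma inSU11_xi M : inSU11 (Pxi R *m M *m Pxi R) <-> inSUxi M.
Proof.
have eJ : J11 R = Pxi R *m Jxi *m Pxi R by rewrite -Pxi_J11 xi_conjK.
rewrite /inSU11 /inSUxi.
have -> : adjM (Pxi R *m M *m Pxi R) *m J11 R *m (Pxi R *m M *m Pxi R)
    = Pxi R *m (adjM M *m Jxi *m M) *m Pxi R.
  have -> : adjM (Pxi R *m M *m Pxi R) = Pxi R *m adjM M *m Pxi R.
    by rewrite !adjM_mul Pxi_adj mulmxA.
  by rewrite eJ !xi_conjM.
have -> : \det (Pxi R *m M *m Pxi R) = \det M.
  by rewrite !det_mulmx mulrC mulrA -det_mulmx PxiK det1 mul1r.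
rewrite eJ; split=> [[h1 h2]|[-> ->]] //; split=> //.
by rewrite -[adjM M *m _ *m M]xi_conjK h1 xi_conjK.
Qed.

Definition mx2 (a x y d : C) : 'M[C]_2 := \matrix_(i < 2, j < 2)
  (if i == 0 then (if j == 0 then a else x) else (if j == 0 then y else d)).

Lemma mx2E M : M = mx2 (M 0 0) (M 0 1) (M 1 0) (M 1 1).
Proof. by mx2_ext. Qed.

Lemma inSUxi_mx2 a x y d : inSUxi (mx2 a x y d) ->
  [/\ a^*%C = a, x^*%C = - x, y^*%C = - y & d^*%C = d] /\ a * d - x * y = 1.
Proof.
case=> /matrixP hJ; rewrite det_mx2 !mxE /= => hdet; split=> //.
have E00 := hJ 0 0; have E01 := hJ 0 1; have E10 := hJ 1 0; have E11 := hJ 1 1.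
rewrite /adjM !mxE !sum_ord2 !mxE !sum_ord2 !mxE /= in E00 E01 E10 E11.
rewrite !mulr0 !mulr1 !add0r !addr0 in E00 E01 E10 E11.
(* Together with [hdet], the entries [E..] say adjM M = Jxi M^-1 Jxi; each identity below
   is an explicit combination of them. *)
split; apply/eqP; rewrite -subr_eq0 ?opprK; apply/eqP.
- transitivity (- a^*%C * (a * d - x * y - 1) + a * (y^*%C * x + a^*%C * d - 1)
    - x * (y^*%C * a + a^*%C * y)); first ring.
  by rewrite hdet E01 E00; ring.
- transitivity (- x^*%C * (a * d - x * y - 1) + a * (d^*%C * x + x^*%C * d)
    - x * (d^*%C * a + x^*%C * y - 1)); first ring.
  by rewrite hdet E11 E10; ring.
- transitivity (- y^*%C * (a * d - x * y - 1) + d * (y^*%C * a + a^*%C * y)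
    - y * (y^*%C * x + a^*%C * d - 1)); first ring.
  by rewrite hdet E00 E01; ring.
- transitivity (- d^*%C * (a * d - x * y - 1) + d * (d^*%C * a + x^*%C * y - 1)
    - y * (d^*%C * x + x^*%C * d)); first ring.
  by rewrite hdet E10 E11; ring.
Qed.

Definition sxi (A X Y D : R) : 'M[C]_2 := mx2 (cR A) (Complex 0 X) (Complex 0 Y) (cR D).

Lemma inSUxi_real M : inSUxi M -> exists A X Y D, M = sxi A X Y D /\ A * D + X * Y = 1.
Proof.
rewrite [M]mx2E => /inSUxi_mx2 [].
case=> /conjc_eq_real -> /conjc_eq_imag -> /conjc_eq_imag -> /conjc_eq_real ->.
move=> /(congr1 (@complex.Re R)) /= hdet.
by exists (Re (M 0 0)), (Im (M 0 1)), (Im (M 1 0)), (Re (M 1 1)); split=> //; lra.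
Qed.

Lemma gxi_mul (l m b c : R) :
  l != 0 -> m != 0 -> gxi l b *m gxi m c = gxi (l * m) (l * c + b / m).
Proof.
move=> hl hm; mx2_ext; apply: complex_eq; rewrite /=; field; by rewrite ?hl ?hm ?mulf_neq0.
Qed.

Lemma gxi10 : gxi 1 0 = 1.
Proof. by mx2_ext; apply: complex_eq; rewrite /= ?invr1. Qed.

Lemma wxi_gxi (l : R) : l != 0 -> wxi *m gxi l 0 = gxi l^-1 0 *m wxi.
Proof. by move=> hl; mx2_ext; apply: complex_eq; rewrite /= ?invrK; field. Qed.

Lemma inSUxi_gxi (l b : R) : l != 0 -> inSUxi (gxi l b).
Proof.
move=> hl; split; last by rewrite det_mx2 !mxE /=; apply: complex_eq; rewrite /=; field.
by rewrite /adjM; mx2_ext; apply: complex_eq; rewrite /=; field.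
Qed.

Lemma inSUxi_wxi : inSUxi wxi.
Proof.
split; last by rewrite det_mx2 !mxE /=; apply: complex_eq; rewrite /=; ring.
by rewrite /adjM; mx2_ext; apply: complex_eq; rewrite /=; ring.
Qed.

Lemma sxi_bruhat A X Y D : A * D + X * Y = 1 ->
  (exists l b, l != 0 /\ sxi A X Y D = gxi l b) \/
  (exists b1 l b2, l != 0 /\ sxi A X Y D = gxi 1 b1 *m wxi *m gxi l b2).
Proof.
move=> hdet; have [Y0|Y_neq0] := eqVneq Y 0.
  rewrite Y0 mulr0 addr0 in hdet.
  have A_neq0 : A != 0 by apply: contra_eq_neq hdet => ->; rewrite mul0r eq_sym oner_neq0.
  left; exists A, X; split=> //.
  mx2_ext; apply: complex_eq; rewrite /= ?Y0 //.
  by apply: (mulfI A_neq0); rewrite hdet mulfV.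
right; exists (- A / Y), Y, (- D); split=> //.
have -> : X = (1 - A * D) / Y by rewrite -hdet; field.
by mx2_ext; apply: complex_eq; rewrite /=; field.
Qed.

Lemma gmat_mul (l m b c : R) :
  l != 0 -> m != 0 -> gmat l b *m gmat m c = gmat (l * m) (l * c + b / m).
Proof. by move=> hl hm; rewrite !gmatE xi_conjM gxi_mul. Qed.

Lemma gmat10 : gmat 1 0 = 1 :> 'M[C]_2.
Proof. by rewrite gmatE gxi10 mulmx1 PxiK. Qed.

Lemma weyl_gmat (l : R) : l != 0 -> weyl *m gmat l 0 = gmat l^-1 0 *m weyl.
Proof. by move=> hl; rewrite /weyl !gmatE !xi_conjM wxi_gxi. Qed.

Lemma inSU11_gmat (l b : R) : l != 0 -> inSU11 (gmat l b).
Proof. by move=> hl; rewrite gmatE; apply/inSU11_xi/inSUxi_gxi. Qed.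

Lemma inSU11_weyl : inSU11 weyl.
Proof. exact/inSU11_xi/inSUxi_wxi. Qed.

Lemma inSU11_bruhat g : inSU11 g ->
  (exists l b, l != 0 /\ g = gmat l b) \/
  (exists b1 l b2, l != 0 /\ g = gmat 1 b1 *m (weyl *m gmat l b2)).
Proof.
rewrite -[g]xi_conjK => /inSU11_xi /inSUxi_real [A [X [Y [D [-> /sxi_bruhat]]]]].
case=> [[l [b [hl ->]]] | [b1 [l [b2 [hl ->]]]]].
  by left; exists l, b.
right; exists b1, l, b2; split=> //; rewrite /weyl !gmatE !xi_conjM.
by congr (_ *m _ *m _); rewrite mulmxA.
Qed.

End SU11.

Section HermitianForm.
Variables (R : realType) (V : lmodType R[i]) (B : V -> V -> R[i]).
Hypothesis HB : hermitian_form B.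

Lemma formDl u v w : B (u + v) w = B u w + B v w.
Proof. by have := HB.1 1 u v w; rewrite scale1r mul1r. Qed.

Lemma form0l w : B 0 w = 0.
Proof. by apply: (addrI (B 0 w)); rewrite -formDl !addr0. Qed.

Lemma formZl a u w : B (a *: u) w = a * B u w.
Proof. by have := HB.1 a u 0 w; rewrite !addr0 form0l addr0. Qed.

Lemma formNl u w : B (- u) w = - B u w.
Proof. by rewrite -scaleN1r formZl mulN1r. Qed.

Lemma formBl u v w : B (u - v) w = B u w - B v w.
Proof. by rewrite formDl formNl. Qed.

Lemma form_conj u v : B v u = (B u v)^*%C.
Proof. exact: HB.2. Qed.

Lemma formDr u v w : B w (u + v) = B w u + B w v.
Proof. by rewrite !(form_conj _ w) formDl rmorphD. Qed.

Lemma formZr a u w : B w (a *: u) = a^*%C * B w u.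
Proof. by rewrite !(form_conj _ w) formZl rmorphM. Qed.

Lemma form0r w : B w 0 = 0.
Proof. by rewrite form_conj form0l rmorph0. Qed.

Lemma formNr u w : B w (- u) = - B w u.
Proof. by rewrite -scaleN1r formZr rmorphN rmorph1 mulN1r. Qed.

Lemma formBr u v w : B w (u - v) = B w u - B w v.
Proof. by rewrite formDr formNr. Qed.

Lemma form_perp_sym u v : B u v = 0 -> B v u = 0.
Proof. by move=> h; rewrite form_conj h rmorph0. Qed.

Lemma Im_form_self u : Im (B u u) = 0.
Proof. by have := congr1 (@complex.Im R) (form_conj u u); rewrite ImJ; lra. Qed.

Lemma form_self_ge0 u : 0 <= Re (B u u) -> 0 <= B u u.
Proof. exact/complex_ge0/Im_form_self. Qed.

Section Unitary.
Variable T : V -> V.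
Hypothesis HT : in_UB B T.

Lemma unitaryD u v : T (u + v) = T u + T v.
Proof. by case: HT. Qed.

Lemma unitaryZ a u : T (a *: u) = a *: T u.
Proof. by case: HT. Qed.

Lemma unitaryDZ a u v : T (a *: u + v) = a *: T u + T v.
Proof. by rewrite unitaryD unitaryZ. Qed.

Lemma unitary_form u v : B (T u) (T v) = B u v.
Proof. by case: HT. Qed.

End Unitary.

Lemma displacement_le0 T v : in_UB B T -> positive B v -> fixes_line T v ->
  displacement B T <= 0.
Proof.
move=> hT hv [a hTv].
have Bvv_ge0 : 0 <= B v v by apply/form_self_ge0/ltW.
have Bvv_neq0 : B v v != 0 by apply: contraTneq hv => ->; rewrite /positive ltxx.
have norm_a : `|a| = 1.
  apply/eqP; rewrite -sqrp_eq1 // sqr_normc; apply/eqP/(mulIf Bvv_neq0).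
  by rewrite mul1r -mulrA -formZr -formZl -hTv unitary_form.
have hd : hdist B (T v) v = 0.
  rewrite /hdist (unitary_form hT) hTv formZl modCE normrM norm_a mul1r.
  rewrite ger0_norm // -expr2 sqrtr_sqr ger0_norm ?Re_ge0 // divff ?gt_eqF //.
  by rewrite /arccosh expr1n subrr sqrtr0 addr0 ln1.
set S := [set hdist B (T w) w | w in [set w | positive B w]].
have S0 : S 0 by exists v.
rewrite /displacement -/S.
have [lbS|noLB] := pselect (has_lbound S); first exact: ge_inf S0.
(* [inf] is 0 on sets that are not bounded below *)
by rewrite inf_out // => -[].
Qed.

Lemma unitary_span2 T u v :
  in_UB B T -> span2 u v (T u) -> span2 u v (T v) -> {homo T : w / span2 u v w}.
Proof.
move=> hT hu hv _ [a [b ->]]; rewrite (unitaryDZ hT) (unitaryZ hT).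
by apply: span2DZ => //; apply: span2Z.
Qed.

Section Krein.
Variable e0 : V.
Hypothesis HV : krein_1_inf B e0.

Lemma form_e0 : B e0 e0 = 1.
Proof. by case: HV. Qed.

Lemma Re_form_e0perp_lt0 z : B z e0 = 0 -> z != 0 -> Re (B z z) < 0.
Proof. by case: HV => _ hdef _ _ _ hz /eqP z_neq0; rewrite -oppr_gt0 -raddfN hdef. Qed.

Lemma Re_form_e0perp_le0 z : B z e0 = 0 -> Re (B z z) <= 0.
Proof.
have [->|z_neq0 hz] := eqVneq z 0; first by rewrite form0r.
exact/ltW/Re_form_e0perp_lt0.
Qed.

Lemma Re_form_e0perp_CS x y : B x e0 = 0 -> B y e0 = 0 ->
  `|Re (B x y)| <= nrmW B x * nrmW B y.
Proof.
move=> hx hy; have [->|y_neq0] := eqVneq y 0.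
  by rewrite form0r normr0 mulr_ge0 ?sqrtr_ge0.
rewrite /nrmW; set p := Re (- B x x); set q := Re (B x y); set r := Re (- B y y).
have r_gt0 : 0 < r by rewrite /r raddfN oppr_gt0 Re_form_e0perp_lt0.
have quad t : 0 <= p - 2 * t * q + t ^+ 2 * r.
  have hz : B (x + cR t *: y) e0 = 0 by rewrite formDl formZl hx hy mulr0 addr0.
  have := Re_form_e0perp_le0 hz.
  rewrite !formDl !formZl !formDr !formZr (form_conj x y) /p /q /r.
  move: (B x x) (B x y) (B y y) => [a1 a2] [b1 b2] [c1 c2].
  rewrite !(raddfD, raddfN, ReM, ImM, ReJ, ImJ) /=; lra.
have p_ge0 : 0 <= p by rewrite /p raddfN oppr_ge0 Re_form_e0perp_le0.
clearbody p q r.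
have disc : q ^+ 2 <= p * r.
  have := quad (q / r).
  have -> : p - 2 * (q / r) * q + (q / r) ^+ 2 * r = (p * r - q ^+ 2) / r.
    by field; rewrite gt_eqF.
  by rewrite pmulr_lge0 ?invr_gt0 // subr_ge0.
by rewrite -sqrtrM // -sqrtr_sqr ler_sqrt // mulr_ge0 // ltW.
Qed.

Lemma e0perp_decomp v : exists2 v', B v' e0 = 0 & v = v' + B v e0 *: e0.
Proof.
by exists (v - B v e0 *: e0); rewrite ?subrK // formBl formZl form_e0 mulr1 subrr.
Qed.

Lemma Re_form_bounded r :
  exists k, 0 <= k /\ forall y, `|Re (B r y)| <= k * hnorm B e0 y.
Proof.
have [r' hr' er] := e0perp_decomp r; set a := B r e0 in er.
exists (nrmW B r' + modC a); split; first by rewrite addr_ge0 ?sqrtr_ge0 ?modC_ge0.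
move=> y; have [y' hy' ey] := e0perp_decomp y; set b := B y e0 in ey.
have modC_b : modC b <= hnorm B e0 y by apply: le_sqrt_sqrD.
have nrmW_y' : nrmW B y' <= hnorm B e0 y.
  by rewrite /hnorm -/b ey addrK addrC; apply: le_sqrt_sqrD.
have -> : B r y = B r' y' + a * b^*%C.
  rewrite er ey formDl !formDr !formZl !formZr form_e0 (form_perp_sym hy') hr'; ring.
rewrite raddfD mulrDl; apply: le_trans (ler_normD _ _) _; apply: lerD.
  apply: le_trans (Re_form_e0perp_CS hr' hy') _.
  by apply: ler_wpM2l nrmW_y'; apply: sqrtr_ge0.
apply: le_trans (Re_le_modC _) _; rewrite modCM modC_conj.
by apply: ler_wpM2l modC_b; apply: modC_ge0.
Qed.

Lemma Re_form_lt0_of_perp_positive p c :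
  positive B p -> B c p = 0 -> c != 0 -> Re (B c c) < 0.
Proof.
move=> p_pos hcp c_neq0; rewrite ltNge; apply/negP => Bcc_ge0.
have Bpp_neq0 : B p p != 0 by apply: contraTneq p_pos => ->; rewrite /positive ltxx.
(* u is orthogonal to e0, and would have nonnegative norm if c had. *)
set a := B p e0; set b := - B c e0; set u := a *: c + b *: p.
have hu : B u e0 = 0 by rewrite formDl !formZl /a /b; ring.
have Buu : B u u = a * a^*%C * B c c + b * b^*%C * B p p.
  rewrite formDl !formZl !formDr !formZr hcp (form_perp_sym hcp); ring.
have Buu_ge0 : 0 <= Re (B u u).
  apply: Re_ge0; rewrite Buu addr_ge0 // mulr_ge0 ?mulcJ_ge0 ?form_self_ge0 //.
  exact: ltW.
have u0 : u = 0.
  by apply/eqP; apply: contraTT Buu_ge0 => u_neq0; rewrite -ltNge Re_form_e0perp_lt0.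
have b0 : b = 0.
  apply: (mulIf Bpp_neq0); rewrite mul0r.
  by have := congr1 (B ^~ p) u0; rewrite form0l formDl !formZl hcp mulr0 add0r.
have a0 : a = 0.
  move: u0; rewrite /u b0 scale0r addr0 => /eqP.
  by rewrite scaler_eq0 (negPf c_neq0) orbF => /eqP.
have p_neq0 : p != 0 by apply: contraTneq p_pos => ->; rewrite /positive form0l ltxx.
by have := Re_form_e0perp_lt0 a0 p_neq0; rewrite ltNge ltW.
Qed.

Section HyperbolicPair.
Variables eta1 eta2 : V.
Hypotheses (Hi1 : isotropic B eta1) (Hi2 : isotropic B eta2) (H12 : B eta1 eta2 = 1).

Local Notation P := (span2 eta1 eta2).

Lemma form_eta21 : B eta2 eta1 = 1.
Proof. by rewrite form_conj H12 rmorph1. Qed.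

Lemma form_span2 a b c d :
  B (a *: eta1 + b *: eta2) (c *: eta1 + d *: eta2) = a * d^*%C + b * c^*%C.
Proof. rewrite !formDl !formZl !formDr !formZr Hi1.2 Hi2.2 H12 form_eta21; ring. Qed.

Lemma positive_eta_sum : positive B (eta1 + eta2).
Proof.
rewrite /positive; have := form_span2 1 1 1 1.
by rewrite !scale1r rmorph1 !mulr1 => ->; rewrite raddfD /= addr_gt0 ?ltr01.
Qed.

Lemma Re_form_lt0_perp_eta c : B c eta1 = 0 -> B c eta2 = 0 -> c != 0 -> Re (B c c) < 0.
Proof.
move=> c1 c2; apply: Re_form_lt0_of_perp_positive positive_eta_sum _.
by rewrite formDr c1 c2 addr0.
Qed.

Lemma Re_form_le0_perp_eta c : B c eta1 = 0 -> B c eta2 = 0 -> Re (B c c) <= 0.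
Proof.
move=> c1 c2; have [->|c_neq0] := eqVneq c 0; first by rewrite form0l.
exact/ltW/Re_form_lt0_perp_eta.
Qed.

Lemma perp_eta_eq0 c : B c eta1 = 0 -> B c eta2 = 0 -> Re (B c c) = 0 -> c = 0.
Proof.
move=> c1 c2 hc; apply/eqP; apply: contraT => /(Re_form_lt0_perp_eta c1 c2).
by rewrite hc ltxx.
Qed.

Lemma eta_decomp v : exists2 e, B e eta1 = 0 /\ B e eta2 = 0 &
  v = B v eta2 *: eta1 + B v eta1 *: eta2 + e.
Proof.
exists (v - (B v eta2 *: eta1 + B v eta1 *: eta2)); last by rewrite addrC subrK.
by rewrite !formBl !formDl !formZl Hi1.2 Hi2.2 H12 form_eta21; split; ring.
Qed.

Lemma span2_closed : closed_subspace B e0 P.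
Proof.
split; [exact: span2_0 | by move=> a u v; apply: span2DZ |].
move=> u v hu hlim; have [e [e1 e2] ev] := eta_decomp v.
have Beu n : B e (u n) = 0.
  by case: (hu n) => a [b ->]; rewrite formDr !formZr e1 e2 !mulr0 addr0.
have Bev : B e v = B e e by rewrite {1}ev !formDr !formZr e1 e2 !mulr0 !add0r.
have [k [k_ge0 hk]] := Re_form_bounded e.
have ReBee : Re (B e e) = 0.
  apply: (tends_to0_dominated_eq0 k_ge0 hlim) => n.
  have -> : Re (B e e) = - Re (B e (u n - v)) by rewrite formBr Beu Bev sub0r raddfN opprK.
  by rewrite normrN hk.
rewrite ev (perp_eta_eq0 e1 e2 ReBee) addr0.
by apply: span2D; apply: span2Z; [apply: span2_l | apply: span2_r].
Qed.

Lemma span2_neq_setT : P <> setT.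
Proof.
move=> PT; case: HV => _ _ _ _ /(_ 2%N) [f [_ gram]].
have [a0 [b0 ef0]] : P (f 0) by rewrite PT.
have [a1 [b1 ef1]] : P (f 1) by rewrite PT.
(* Two orthonormal negative vectors would have Gram determinant 1, but in the plane of
   signature (1,1) spanned by eta1, eta2 every Gram determinant is <= 0. *)
have gram_det : B (f 0) (f 0) * B (f 1) (f 1) - B (f 0) (f 1) * B (f 1) (f 0)
    = - ((a0 * b1 - a1 * b0) * (a0 * b1 - a1 * b0)^*%C).
  by rewrite ef0 ef1 !form_span2 rmorphB !rmorphM; ring.
have := mulcJ_ge0 (a0 * b1 - a1 * b0).
have G i j : B (f i) (f j) = - (i == j)%:R by rewrite -gram opprK.
rewrite -[_ * _]opprK -gram_det !G /=.
by rewrite mulrNN mulr1 oppr0 mulr0 subr0 oppr_ge0 ler10.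
Qed.

Section Parabolic.
Variables (T : V -> V) (K : R[i]) (c : V).
Hypotheses (HT : in_UB B T) (HTeta2 : T eta2 = K *: eta1 + eta2 + c).
Hypotheses (c1 : B c eta1 = 0) (c2 : B c eta2 = 0).

Lemma parabolic_Re_coef : 2 * Re K = - Re (B c c).
Proof.
have := unitary_form HT eta2 eta2; rewrite HTeta2 Hi2.2.
rewrite !formDl !formZl !formDr !formZr Hi1.2 Hi2.2 H12 form_eta21 c1 c2.
rewrite (form_perp_sym c1) (form_perp_sym c2) => h.
have : K + K^*%C + B c c = 0 by rewrite -h; ring.
by move/(congr1 (@complex.Re R)); rewrite !raddfD /= ReJ; lra.
Qed.

Lemma parabolic_Re_coef_ge0 : 0 <= Re K.
Proof. by have := Re_form_le0_perp_eta c1 c2; have := parabolic_Re_coef; lra. Qed.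

Lemma parabolic_Re_coef_eq0 : Re K = 0 -> c = 0.
Proof. by move=> ReK0; apply: perp_eta_eq0 => //; have := parabolic_Re_coef; lra. Qed.

End Parabolic.

Lemma isotropic_eigenvector_span2 T a d mu u :
  in_UB B T -> T eta1 = a *: eta1 -> T eta2 = d *: eta2 -> a != d ->
  T u = mu *: u -> B u u = 0 -> P u.
Proof.
move=> hT h1 h2 a_neq_d hu huu.
have [e [e1 e2] ue] := eta_decomp u; set al := B u eta2 in ue; set be := B u eta1 in ue.
have hal : mu * d^*%C * al = al.
  by have := unitary_form hT u eta2; rewrite hu h2 formZl formZr mulrA.
have hbe : mu * a^*%C * be = be.
  by have := unitary_form hT u eta1; rewrite hu h1 formZl formZr mulrA.
have al_be0 : al = 0 \/ be = 0.
  suff /eqP : al * be = 0 by rewrite mulf_eq0 => /orP[] /eqP; [left | right].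
  apply/eqP; apply: contra_neqT a_neq_d; rewrite mulf_eq0 negb_or => /andP[al_neq0 be_neq0].
  have mud : mu * d^*%C = 1 by apply: (mulIf al_neq0); rewrite mul1r.
  have mua : mu * a^*%C = 1 by apply: (mulIf be_neq0); rewrite mul1r.
  have mu_neq0 : mu != 0 by apply: contra_eq_neq mud => ->; rewrite mul0r eq_sym oner_neq0.
  by rewrite -[a]conjcK -[d]conjcK; congr (_^*%C); apply: (mulfI mu_neq0); rewrite mua mud.
have BeX : B e (al *: eta1 + be *: eta2) = 0.
  by rewrite formDr !formZr e1 e2 !mulr0 addr0.
have Bee : B e e = 0.
  move: huu; rewrite ue formDl !(formDr _ e) BeX (form_perp_sym BeX) form_span2 addr0 add0r.
  by case: al_be0 => ->; rewrite rmorph0 !mulr0 !mul0r !add0r.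
by exists al, be; rewrite ue (perp_eta_eq0 e1 e2) ?Bee ?addr0.
Qed.

Section Representation.
Variable rho : 'M[R[i]]_2 -> V -> V.
Hypothesis Hrep : is_rep B rho.
Hypothesis Hfix1 : forall lam b : R, lam != 0 -> fixes_line (rho (gmat lam b)) eta1.
Hypothesis Hfix2 : forall lam : R, lam != 0 -> fixes_line (rho (gmat lam 0)) eta2.

Local Notation stab g := {homo rho g : u / P u}.

Lemma rho_unitary g : inSU11 g -> in_UB B (rho g).
Proof. by case: Hrep => h _ _ _; apply: h. Qed.

Lemma rho_mul g h : inSU11 g -> inSU11 h ->
  exists2 c, c != 0 & forall v, rho (g *m h) v = c *: rho g (rho h v).
Proof.
case: Hrep => _ hmul _ _ hg hh; have [c [hc e]] := hmul g h hg hh.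
by exists c => //; apply: unimod_neq0.
Qed.

Lemma inSU11_1 : inSU11 (1 : 'M[R[i]]_2).
Proof. by rewrite -gmat10; apply: inSU11_gmat; rewrite oner_neq0. Qed.

Lemma rho1_scalar : exists k, forall v, rho 1 v = k *: v.
Proof.
have [c c_neq0 e] := rho_mul inSU11_1 inSU11_1.
have [_ _ [f fK Kf] _] := rho_unitary inSU11_1.
exists c^-1 => w; have := e (f w); rewrite mul1mx Kf => hw.
by rewrite [in RHS]hw scalerA mulVf // scale1r.
Qed.

Lemma stab1 : stab 1.
Proof. by have [k hk] := rho1_scalar; move=> u hu; rewrite hk; apply: span2Z. Qed.

Lemma stab_mul g h : inSU11 g -> inSU11 h -> stab g -> stab h -> stab (g *m h).
Proof.
move=> hg hh Sg Sh u hu; have [c _ ->] := rho_mul hg hh.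
by apply/span2Z/Sg/Sh.
Qed.

Lemma stab_of_eta g : inSU11 g -> P (rho g eta1) -> P (rho g eta2) -> stab g.
Proof. by move=> hg; apply/unitary_span2/rho_unitary. Qed.

Lemma stab_diag (l : R) : l != 0 -> stab (gmat l 0).
Proof.
move=> hl; apply: stab_of_eta; first exact: inSU11_gmat.
  by have [a ->] := Hfix1 0 hl; apply/span2Z/span2_l.
by have [a ->] := Hfix2 hl; apply/span2Z/span2_r.
Qed.

Lemma stab_upper_scale (b y : R) : stab (gmat 1 b) -> 0 < y / b -> stab (gmat 1 y).
Proof.
move=> Sb hy; have b_neq0 : b != 0 by apply: contraTneq hy => ->; rewrite invr0 mulr0 ltxx.
set m := Num.sqrt (y / b).
have m_neq0 : m != 0 by rewrite sqrtr_eq0 -ltNge.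
have mV_neq0 : m^-1 != 0 by rewrite invr_eq0.
have one_neq0 : (1 : R) != 0 := oner_neq0 R.
have mm : m * m = y / b by rewrite -expr2 sqr_sqrtr ?ltW.
have -> : gmat 1 y = gmat m 0 *m gmat 1 b *m gmat m^-1 0.
  rewrite !gmat_mul ?mulf_neq0 // mulr1 divff // mulr0 mul0r addr0 add0r invrK.
  by rewrite mulrAC mm mulfVK.
have hm := inSU11_gmat 0 m_neq0; have hb := inSU11_gmat b one_neq0.
apply: (stab_mul (inSU11_mul hm hb) (inSU11_gmat 0 mV_neq0)); last exact: stab_diag.
by apply: stab_mul hm hb (stab_diag m_neq0) Sb.
Qed.

Lemma stab_upper_unipotent (b : R) : b != 0 ->
  stab (gmat 1 b) -> stab (gmat 1 (- b)) -> forall y, stab (gmat 1 y).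
Proof.
move=> b_neq0 Sb SNb y; have [->|y_neq0] := eqVneq y 0; first by rewrite gmat10; exact: stab1.
have [hy|hy] := ltP 0 (y / b); first exact: stab_upper_scale Sb hy.
apply: stab_upper_scale SNb _.
by rewrite invrN mulrN oppr_gt0 lt_neqAle hy andbT mulf_neq0 ?invr_eq0.
Qed.

Lemma stab_upper (b : R) : b != 0 -> stab (gmat 1 b) -> stab (gmat 1 (- b)) ->
  forall l y : R, l != 0 -> stab (gmat l y).
Proof.
move=> b_neq0 Sb SNb l y l_neq0; have one_neq0 : (1 : R) != 0 := oner_neq0 R.
have -> : gmat l y = gmat l 0 *m gmat 1 (y / l).
  by rewrite gmat_mul // mulr1 mul0r addr0 mulrC mulfVK.
apply: (stab_mul (inSU11_gmat 0 l_neq0) (inSU11_gmat _ one_neq0) (stab_diag l_neq0)).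
exact: stab_upper_unipotent b_neq0 Sb SNb _.
Qed.

Lemma span2_rho_inv g h v : inSU11 g -> inSU11 h -> g *m h = 1 ->
  P v -> rho h v = eta2 -> P (rho g eta2).
Proof.
move=> hg hh gh hv hv2; have [c c_neq0 e] := rho_mul hg hh; have [k hk] := rho1_scalar.
have -> : rho g eta2 = (c^-1 * k) *: v.
  by rewrite -scalerA -hk -gh e scalerA mulVf // scale1r hv2.
exact: span2Z hv.
Qed.

Lemma not_irreducible_of_stab : (forall g, inSU11 g -> stab g) -> ~ irreducible B e0 rho.
Proof.
move=> hstab [_ _ []]; exists P; split; first exact: span2_closed.
split; last by split; [exact: span2_neq_setT | exact: hstab].
exists (eta1 + eta2); split; last exact: positive_eta_sum.
by apply: span2D; [apply: span2_l | apply: span2_r].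
Qed.

Variable lam0 : R.
Hypotheses (lam0_neq0 : lam0 != 0) (Hdisp : 0 < displacement B (rho (gmat lam0 0))).

Lemma hyperbolic_eigenvalues_neq a d :
  rho (gmat lam0 0) eta1 = a *: eta1 -> rho (gmat lam0 0) eta2 = d *: eta2 -> a != d.
Proof.
move=> h1 h2; apply: contraTneq Hdisp => ad; rewrite -leNgt.
have hT := rho_unitary (inSU11_gmat 0 lam0_neq0).
apply: (displacement_le0 hT positive_eta_sum).
by exists a; rewrite unitaryD // h1 h2 ad scalerDr.
Qed.

Lemma stab_weyl : stab (weyl R).
Proof.
have lV : lam0^-1 != 0 by rewrite invr_eq0.
have hW := inSU11_weyl R; have hg := inSU11_gmat 0 lam0_neq0; have hgV := inSU11_gmat 0 lV.
have [c1 _ e1] := rho_mul hW hgV; have [c2 c2_neq0 e2] := rho_mul hg hW.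
have [a h1] := Hfix1 0 lam0_neq0; have [d h2] := Hfix2 lam0_neq0.
have ad := hyperbolic_eigenvalues_neq h1 h2.
(* [weyl] conjugates g(lam0^-1, 0) into g(lam0, 0), so it maps the isotropic eigenvectors
   eta1, eta2 of the former to isotropic eigenvectors of the latter. *)
have isoW w a' : rho (gmat lam0^-1 0) w = a' *: w -> B w w = 0 -> P (rho (weyl R) w).
  move=> hw hww.
  apply: (isotropic_eigenvector_span2 (rho_unitary hg) h1 h2 ad (mu := c2^-1 * (c1 * a'))).
    have := e1 w; rewrite weyl_gmat // invrK e2 hw (unitaryZ (rho_unitary hW)) scalerA => h.
    by rewrite -scalerA -h scalerA mulVf // scale1r.
  by rewrite (unitary_form (rho_unitary hW)).
apply: stab_of_eta hW _ _.
  by have [a' ha'] := Hfix1 0 lV; apply: isoW ha' Hi1.2.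
by have [a' ha'] := Hfix2 lV; apply: isoW ha' Hi2.2.
Qed.

Lemma stab_all (b : R) : b != 0 -> stab (gmat 1 b) -> stab (gmat 1 (- b)) ->
  forall g, inSU11 g -> stab g.
Proof.
move=> b_neq0 Sb SNb g /inSU11_bruhat [[l [y [l_neq0 ->]]] | [b1 [l [b2 [l_neq0 ->]]]]].
  exact: stab_upper b_neq0 Sb SNb _ _ l_neq0.
have one_neq0 : (1 : R) != 0 := oner_neq0 R.
have hWg := inSU11_mul (inSU11_weyl R) (inSU11_gmat b2 l_neq0).
apply: (stab_mul (inSU11_gmat b1 one_neq0) hWg).
  exact: stab_upper b_neq0 Sb SNb _ _ one_neq0.
apply: (stab_mul (inSU11_weyl R) (inSU11_gmat b2 l_neq0) stab_weyl).
exact: stab_upper b_neq0 Sb SNb _ _ l_neq0.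
Qed.

Lemma parabolic_not_irreducible (b : R) T K : b != 0 -> in_UB B T ->
  (exists c, unimod c /\ forall v, T v = c *: rho (gmat 1 b) v) ->
  T eta1 = eta1 -> T eta2 = K *: eta1 + eta2 -> ~ irreducible B e0 rho.
Proof.
move=> b_neq0 hT [c [c_unimod hc]] h1 h2; have c_neq0 := unimod_neq0 c_unimod.
have one_neq0 : (1 : R) != 0 := oner_neq0 R.
have hb := inSU11_gmat b one_neq0; have hNb := inSU11_gmat (- b) one_neq0.
have rho_b v : rho (gmat 1 b) v = c^-1 *: T v by rewrite hc scalerA mulVf // scale1r.
have Sb : stab (gmat 1 b).
  apply: (stab_of_eta hb); rewrite rho_b; apply: span2Z; first by rewrite h1; apply: span2_l.
  by rewrite h2; apply: span2D; [apply/span2Z/span2_l | apply: span2_r].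
have SNb : stab (gmat 1 (- b)).
  apply: (stab_of_eta hNb); first by have [a ->] := Hfix1 (- b) one_neq0; apply/span2Z/span2_l.
  (* T^-1 eta2 = eta2 - K eta1 *)
  apply: (span2_rho_inv hNb hb _ (v := c *: (- K *: eta1 + eta2))).
  - by rewrite gmat_mul // mulr1 mul1r divr1 subrr gmat10.
  - by apply/span2Z/span2DZ; [apply: span2_l | apply: span2_r].
  - rewrite rho_b (unitaryZ hT) (unitaryDZ hT) h1 h2 addrA scaleNr addNr add0r.
    by rewrite scalerA mulVf // scale1r.
exact/not_irreducible_of_stab/(stab_all b_neq0 Sb SNb).
Qed.

End Representation.

End HyperbolicPair.
End Krein.
End HermitianForm.

Theorem mainTheorem18 (R : realType) (V : lmodType R[i]) (B : V -> V -> R[i])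
  (e0 : V) (HB : hermitian_form B) (HV : krein_1_inf B e0)
  (rho1 rho2 : 'M[R[i]]_2 -> V -> V)
  (Hrep1 : is_rep B rho1) (Hrep2 : is_rep B rho2)
  (Hirr1 : irreducible B e0 rho1) (Hirr2 : irreducible B e0 rho2)
  (* ell(rho1) = ell(rho2) = t *)
  (t : R) (Ht : 0 < t)
  (Hl1 : forall lam : R, 0 < lam -> displacement B (rho1 (gmat lam 0)) = t * `|ln lam|)
  (Hl2 : forall lam : R, 0 < lam -> displacement B (rho2 (gmat lam 0)) = t * `|ln lam|)
  (* common distinguished isotropic representatives *)
  (eta1 eta2 : V) (Hi1 : isotropic B eta1) (Hi2 : isotropic B eta2)
  (H12 : B eta1 eta2 = 1)
  (Hfix1 : forall lam b : R, lam != 0 ->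
      fixes_line (rho1 (gmat lam b)) eta1 /\ fixes_line (rho2 (gmat lam b)) eta1)
  (Hfix2 : forall lam : R, lam != 0 ->
      fixes_line (rho1 (gmat lam 0)) eta2 /\ fixes_line (rho2 (gmat lam 0)) eta2)
  (* the functions K_1, K_2 at b *)
  (b : R) (Hb : b != 0)
  (T1 T2 : V -> V) (K1 K2 : R[i]) (c1 c2 : V)
  (HT1 : in_UB B T1 /\ (exists c, unimod c /\ forall v, T1 v = c *: rho1 (gmat 1 b) v))
  (HT2 : in_UB B T2 /\ (exists c, unimod c /\ forall v, T2 v = c *: rho2 (gmat 1 b) v))
  (HT1e : T1 eta1 = eta1) (HT2e : T2 eta1 = eta1)
  (HK1 : T1 eta2 = K1 *: eta1 + eta2 + c1 /\ B c1 eta1 = 0 /\ B c1 eta2 = 0)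
  (HK2 : T2 eta2 = K2 *: eta1 + eta2 + c2 /\ B c2 eta1 = 0 /\ B c2 eta2 = 0) :
  K1 + K2 != 0.
Proof.
apply/eqP => hK.
have ReK1_ge0 := parabolic_Re_coef_ge0 HB HV Hi1 Hi2 H12 HT1.1 HK1.1 HK1.2.1 HK1.2.2.
have ReK2_ge0 := parabolic_Re_coef_ge0 HB HV Hi1 Hi2 H12 HT2.1 HK2.1 HK2.2.1 HK2.2.2.
have ReK1_0 : Re K1 = 0.
  by move: (congr1 (@complex.Re R) hK); rewrite raddfD /=; lra.
have c1_0 := parabolic_Re_coef_eq0 HB HV Hi1 Hi2 H12 HT1.1 HK1.1 HK1.2.1 HK1.2.2 ReK1_0.
have two_neq0 : (2 : R) != 0 by rewrite pnatr_eq0.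
have rho1_hyp : 0 < displacement B (rho1 (gmat 2 0)).
  by rewrite Hl1 ?ltr0n // mulr_gt0 // normr_gt0 gt_eqF // ln_gt0 // ltr1n.
apply: (parabolic_not_irreducible HB HV Hi1 Hi2 H12 Hrep1 (fun l b h => (Hfix1 l b h).1)
  (fun l h => (Hfix2 l h).1) two_neq0 rho1_hyp Hb HT1.1 HT1.2 HT1e _ Hirr1).
by rewrite HK1.1 c1_0 addr0.
Qed.
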